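(* With the notation of the context and $\lambda>0$, define for each $x$ $$S_\lambda(x):=\sum_{y=1}^C d(y,\hat y(x))\,\mathbb{I}\{y\in\mathcal{C}_\lambda(x)\},\qquad S_0(x):=\sum_{y=1}^C d(y,\hat y(x))\,\mathbb{I}\{y\in\mathcal{C}(x)\}.$$ Then $S_\lambda(x)\le S_0(x)$ for every $x$, and consequently $\mathbb{E}[S_\lambda(X)]\le\mathbb{E}[S_0(X)]$ for any random input $X$.
   Context: Classification with $C$ classes, labels in $[C]=\{1,\dots,C\}$. A classifier outputs a softmax vector $\hat\pi(x)\in\mathbb{R}^C$ and predicted class $\hat y(x)=\arg\max_i \hat\pi_i(x)$. A map $g:[C]\to[G]$ partitions the classes into $G$ groups. Define $d(y,y'):=\mathbb{I}\{g(y)\neq g(y')\}$. Given any real-valued score function $s(x,y)$ and $\lambda>0$, define the penalized score $s_\lambda(x,y):=s(x,y)+\lambda\, d(y,\hat y(x))$. Given a calibration set $\{(x_i,y_i)\}_{i=1}^n$ and $\alpha\in(0,1)$ with $\lceil (n+1)(1-\alpha)\rceil\le n$, $\hat q$ (resp. $\hat q_\lambda$) is the $\lceil (n+1)(1-\alpha)\rceil$-th smallest value of $\{s(x_i,y_i)\}_{i=1}^n$ (resp. $\{s_\lambda(x_i,y_i)\}_{i=1}^n$). Prediction sets: $\mathcal{C}(x)=\{y: s(x,y)\le\hat q\}$, $\mathcal{C}_\lambda(x)=\{y: s_\lambda(x,y)\le\hat q_\lambda\}$. *)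

From HB Require Import structures.
From mathcomp Require Import all_boot all_order all_algebra.
From mathcomp Require Import all_classical all_reals all_analysis.
Set Implicit Arguments. Unset Strict Implicit. Unset Printing Implicit Defensive.
Import Order.TTheory GRing.Theory Num.Theory.
Local Open Scope ring_scope.

Section conformal.
Variables (R : realType) (X : Type) (C G : nat).

(* predicted class: an argmax of the softmax vector pihat x over [C] = 'I_C;
   i0 is any class (needed to make the arg max well-defined, C > 0) *)
Definition yhat (i0 : 'I_C) (pihat : X -> 'I_C -> R) (x : X) : 'I_C :=
  [arg max_(i > i0) pihat x i]%O.

Definition dgrp (g : 'I_C -> 'I_G) (y y' : 'I_C) : R := (g y != g y')%:R.

Definition pen_score (i0 : 'I_C) (pihat : X -> 'I_C -> R) (g : 'I_C -> 'I_G)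
  (s : X -> 'I_C -> R) (lam : R) (x : X) (y : 'I_C) : R :=
  s x y + lam * dgrp g y (yhat i0 pihat x).

Definition qrank (n : nat) (alpha : R) : int :=
  Num.ceil ((n.+1)%:R * (1 - alpha)).

(* k-th smallest value (k >= 1) of the calibration scores sc(x_i,y_i), i < n *)
Definition kth_smallest (n : nat) (v : 'I_n -> R) (k : int) : R :=
  nth 0 (sort <=%R [seq v i | i <- enum 'I_n]) (`|k|%N).-1.

Definition qhat (sc : X -> 'I_C -> R) (n : nat) (cal : 'I_n -> X * 'I_C)
  (alpha : R) : R :=
  kth_smallest (fun i => sc (cal i).1 (cal i).2) (qrank n alpha).

Definition predset (sc : X -> 'I_C -> R) (q : R) (x : X) : {set 'I_C} :=
  [set y | sc x y <= q].

Definition Sgrp (i0 : 'I_C) (pihat : X -> 'I_C -> R) (g : 'I_C -> 'I_G)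
  (Cset : X -> {set 'I_C}) (x : X) : R :=
  \sum_(y : 'I_C) dgrp g y (yhat i0 pihat x) * (y \in Cset x)%:R.

End conformal.

From HB Require Import structures.
From mathcomp Require Import all_boot all_order all_algebra.
From mathcomp Require Import all_classical all_reals all_analysis.
Import Order.TTheory GRing.Theory Num.Theory.

Set Implicit Arguments.
Unset Strict Implicit.
Unset Printing Implicit Defensive.

Local Open Scope ring_scope.

(* The penalty raises every calibration score by at most [lam], so the
   empirical quantile rises by at most [lam]: [qhat sl <= qhat s + lam].
   A class y outside the predicted group is charged the full penalty, hence
   [y \in C_lam(x)] gives [s x y + lam <= qhat sl <= qhat s + lam], i.e.
   [y \in C(x)].  So the penalized set contains no more out-of-group classes,
   which is the pointwise inequality; the expected one follows by monotonicity
   of the integral of nonnegative functions. *)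

Section sorted_nth.
Variable R : realDomainType.
Implicit Types (s : seq R) (t : R).

Lemma sorted_nth_le s k t : sorted <=%R s -> (k < size s)%N ->
  (k < count (fun x : R => (x <= t)%R) s)%N -> nth 0 s k <= t.
Proof.
move=> ss ks kc; rewrite leNgt; apply/negP => tk.
have sd : sorted <=%R (drop k s).
  by move: ss; rewrite -{1}(cat_take_drop k s) => /cat_sorted2[].
have drop_gt : count (fun x : R => (x <= t)%R) (drop k s) = 0%N.
  apply/eqP; rewrite -leqn0 leqNgt -has_count; apply/hasP => -[x xd xt].
  move: sd xd; rewrite (drop_nth 0 ks) /= => sd; rewrite in_cons.
  case/orP => [/eqP xe | xin]; first by move: xt; rewrite xe leNgt tk.
  have /allP /(_ x xin) kx := order_path_min (@le_trans _ R) sd.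
  by move: xt; rewrite leNgt (lt_le_trans tk kx).
move: kc; rewrite -(cat_take_drop k s) count_cat drop_gt addn0.
by move/leq_trans/(_ (count_size _ _)); rewrite size_take ks ltnn.
Qed.

Lemma sorted_count_le_nth s k : sorted <=%R s -> (k < size s)%N ->
  (k < count (fun x : R => (x <= nth 0 s k)%R) s)%N.
Proof.
move=> ss ks; rewrite -{2}(cat_take_drop k.+1 s) count_cat.
apply: leq_trans (leq_addr _ _).
have : all (fun x : R => (x <= nth 0 s k)%R) (take k.+1 s).
  apply/(all_nthP 0) => i; rewrite (size_takel ks) => ik.
  by rewrite nth_take // (le_sorted_leq_nth 0 ss) // inE (leq_trans ik).
by rewrite all_count => /eqP ->; rewrite (size_takel ks).
Qed.

End sorted_nth.

Lemma kth_smallest_leD (R : realType) (n : nat) (u w : 'I_n -> R) (k : int)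
    (c : R) :
  0 < k <= n%:Z -> (forall i, u i <= w i + c) ->
  kth_smallest u k <= kth_smallest w k + c.
Proof.
case: k => [k|//]; rewrite ltz_nat lez_nat => /andP[k0 kn] uw.
rewrite /kth_smallest /=; set su := sort _ _; set sw := sort _ _.
have size_sort_n (v : 'I_n -> R) : size (sort <=%R [seq v i | i <- enum 'I_n]) = n.
  by rewrite size_sort size_map size_enum_ord.
have kn' : (k.-1 < n)%N by rewrite prednK.
have sorted_su : sorted <=%R su by apply: sort_sorted; exact: le_total.
have sorted_sw : sorted <=%R sw by apply: sort_sorted; exact: le_total.
apply: sorted_nth_le => //; first by rewrite size_sort_n.
have kw : (k.-1 < size sw)%N by rewrite size_sort_n.
apply: leq_trans (sorted_count_le_nth sorted_sw kw) _.
rewrite /su /sw !(permP (permEl (perm_sort _ _))) !count_map.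
by apply: sub_count => i /= wi; apply: le_trans (uw i) _; rewrite lerD2r.
Qed.

Lemma qrank_gt0 (R : realType) (n : nat) (alpha : R) :
  alpha < 1 -> 0 < qrank n alpha.
Proof. by move=> a1; rewrite /qrank ceil_gt0 mulr_gt0 ?ltr0n // subr_gt0. Qed.

(* No measurability is needed: the integral of a nonnegative function is the
   supremum over the simple functions below it, and the scores [s] are arbitrary. *)
Lemma ge0_le_integralT (d : measure_display) (T : measurableType d)
    (R : realType) (mu : {measure set T -> \bar R}) (f1 f2 : T -> \bar R) :
  (forall x, 0 <= f1 x)%E -> (forall x, f1 x <= f2 x)%E ->
  (\int[mu]_x f1 x <= \int[mu]_x f2 x)%E.
Proof.
move=> f1_ge0 f12; have f2_ge0 x : (0 <= f2 x)%E := le_trans (f1_ge0 x) (f12 x).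
rewrite !ge0_integralTE //; apply: ereal_sup_le => _ [h hf1 <-].
by exists h => //= x; apply: le_trans (hf1 x) (f12 x).
Qed.

Section penalized.
Variables (R : realType) (X : Type) (C G : nat) (i0 : 'I_C).
Variables (pihat : X -> 'I_C -> R) (g : 'I_C -> 'I_G).

Lemma dgrp_ge0 y y' : 0 <= dgrp R g y y'.
Proof. by rewrite /dgrp ler0n. Qed.

Lemma Sgrp_ge0 (A : X -> {set 'I_C}) x : 0 <= Sgrp i0 pihat g A x.
Proof. by apply: sumr_ge0 => y _; rewrite mulr_ge0 ?dgrp_ge0. Qed.

Lemma Sgrp_le (A B : X -> {set 'I_C}) x :
  (forall y, g y != g (yhat i0 pihat x) -> y \in A x -> y \in B x) ->
  Sgrp i0 pihat g A x <= Sgrp i0 pihat g B x.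
Proof.
move=> AB; apply: ler_sum => y _; rewrite /dgrp.
case: (boolP (g y != _)) => [/AB yAB|]; last by rewrite !mul0r.
by rewrite !mul1r ler_nat; case: (y \in A x) yAB => // ->.
Qed.

Lemma qhat_leD (n : nat) (cal : 'I_n -> X * 'I_C) (alpha c : R)
    (sc1 sc2 : X -> 'I_C -> R) :
  alpha < 1 -> qrank n alpha <= n%:Z ->
  (forall x y, sc1 x y <= sc2 x y + c) ->
  qhat sc1 cal alpha <= qhat sc2 cal alpha + c.
Proof. by move=> a1 kn sc12; apply: kth_smallest_leD; rewrite ?qrank_gt0. Qed.

Variables (s : X -> 'I_C -> R) (lam : R).
Hypothesis lam_ge0 : 0 <= lam.
Let sl := pen_score i0 pihat g s lam.

Lemma pen_score_leD x y : sl x y <= s x y + lam.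
Proof. by rewrite lerD2l /dgrp; case: (_ != _); rewrite ?mulr1 ?mulr0. Qed.

Lemma predset_pen_score_out x y (q q' : R) : q' <= q + lam ->
  g y != g (yhat i0 pihat x) -> y \in predset sl q' x -> y \in predset s q x.
Proof.
move=> qq' out; rewrite !inE /sl /pen_score /dgrp out mulr1 => slq'.
by rewrite -(lerD2r lam) (le_trans slq' qq').
Qed.

End penalized.

Theorem mainTheorem3 (R : realType) (d : measure_display) (T : measurableType d)
  (C G : nat) (hC : (0 < C)%N)
  (pihat : T -> 'I_C -> R) (g : 'I_C -> 'I_G) (s : T -> 'I_C -> R)
  (lam : R) (hlam : 0 < lam)
  (n : nat) (cal : 'I_n -> T * 'I_C) (alpha : R)
  (halpha : 0 < alpha < 1) (hk : qrank n alpha <= n%:Z)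
  (P : probability T R) :
  let i0 := Ordinal hC in
  let sl := pen_score i0 pihat g s lam in
  let Sl := Sgrp i0 pihat g (predset sl (qhat sl cal alpha)) in
  let S0 := Sgrp i0 pihat g (predset s (qhat s cal alpha)) in
  (forall x, Sl x <= S0 x) /\
  (\int[P]_x (Sl x)%:E <= \int[P]_x (S0 x)%:E)%E.
Proof.
move=> i0 sl Sl S0; have lam_ge0 := ltW hlam.
have alpha_lt1 : alpha < 1 by case/andP: halpha.
have q_le : qhat sl cal alpha <= qhat s cal alpha + lam.
  exact: qhat_leD alpha_lt1 hk (pen_score_leD _ _ _ _ lam_ge0).
have Sl_le_S0 x : Sl x <= S0 x.
  by apply: Sgrp_le => y; exact: predset_pen_score_out q_le.
split => //.
by apply: ge0_le_integralT => x; rewrite lee_fin ?Sgrp_ge0 //; exact: Sl_le_S0.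
Qed.
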